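(* Let $0<q<1$, $\alpha,\gamma\in\mathbb{C}$ with $q^\gamma\notin q^{\mathbb{Z}}$, and $z\in\mathbb{C}\setminus\{0\}$ (complex powers of $z$ taken with a fixed branch of $\log z$). For $n\in\mathbb{Z}$ put \begin{align*} \varphi_n&=(q^{n+\gamma};q)_\infty\,{}_1\phi_1(q^\alpha;q^{n+\gamma};q,-q^{n+\gamma}z),\\ \psi_n&=q^{-\alpha(n+\gamma)-(n+\gamma-1)(n+\gamma-2)/2}\,\frac{(q^{n+\gamma-\alpha};q)_\infty}{(q^{n+\gamma-1};q)_\infty}\,z^{1-n-\gamma}\,{}_1\phi_1(q^{\alpha-n-\gamma+1};q^{2-n-\gamma};q,-qz). \end{align*} Then \[ \varphi_0\psi_1-\varphi_1\psi_0=q^{-\alpha(\gamma+1)-\frac12\gamma(\gamma-1)}\,(q^{\gamma-\alpha+1};q)_\infty\,(-q^\alpha z;q)_\infty\,z^{-\gamma}. \] Equivalently, \begin{align*} &{}_1\phi_1(q^\alpha;q^\gamma;q,q^{\gamma-\alpha}z)\,{}_1\phi_1(q^{\alpha-\gamma};q^{1-\gamma};q,q^{1-\alpha}z)\\ &+\frac{q^{\gamma-1}(1-q^{\gamma-\alpha})z}{(1-q^{\gamma-1})(1-q^\gamma)}\,{}_1\phi_1(q^\alpha;q^{\gamma+1};q,q^{\gamma-\alpha+1}z)\,{}_1\phi_1(q^{\alpha-\gamma+1};q^{2-\gamma};q,q^{1-\alpha}z)=(z;q)_\infty. \end{align*}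
   Context: Complex powers of $q$ are $q^s=e^{s\log q}$. $(a;q)_k=\prod_{j=0}^{k-1}(1-aq^j)$, $(a;q)_\infty=\lim_k(a;q)_k$, and the $q$-confluent hypergeometric function is \[ {}_1\phi_1(a;b;q,z)=\sum_{k=0}^\infty(-1)^kq^{k(k-1)/2}\frac{(a;q)_k}{(b;q)_k(q;q)_k}\,z^k. \] *)

From Stdlib Require Import Reals ZArith.
From Coquelicot Require Export Coquelicot.
Open Scope R_scope.

Definition cexp (w : C) : C :=
  (exp (Re w) * cos (Im w), exp (Re w) * sin (Im w)).

Definition qpow (q : R) (s : C) : C := cexp (Cmult s (RtoC (ln q))).

(* complex power of z with a fixed branch L of log z (cexp L = z) : z^s = e^{s L} *)
Definition zpow (L : C) (s : C) : C := cexp (Cmult s L).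

(* limit of a complex sequence, taken componentwise (only meaningful when it converges) *)
Definition Clim (u : nat -> C) : C :=
  (real (Lim_seq (fun k => Re (u k))), real (Lim_seq (fun k => Im (u k)))).

Fixpoint qpoch (a : C) (q : R) (k : nat) : C :=
  match k with
  | O => RtoC 1
  | S k' => Cmult (qpoch a q k') (Cminus (RtoC 1) (Cmult a (RtoC (q ^ k'))))
  end.

Definition qpoch_inf (a : C) (q : R) : C := Clim (qpoch a q).

Definition phi11_term (a b : C) (q : R) (z : C) (k : nat) : C :=
  Cmult (RtoC ((-1) ^ k * q ^ (k * (k - 1) / 2)%nat))
    (Cmult (Cdiv (qpoch a q k) (Cmult (qpoch b q k) (qpoch (RtoC q) q k)))
           (Cpow z k)).

Definition phi11 (a b : C) (q : R) (z : C) : C :=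
  Clim (fun n => sum_n (phi11_term a b q z) n).

Definition phi_n (q : R) (al ga z : C) (n : Z) : C :=
  let ng := Cplus (RtoC (IZR n)) ga in
  Cmult (qpoch_inf (qpow q ng) q)
        (phi11 (qpow q al) (qpow q ng) q (Copp (Cmult (qpow q ng) z))).

Definition psi_n (q : R) (al ga z L : C) (n : Z) : C :=
  let ng := Cplus (RtoC (IZR n)) ga in
  Cmult (qpow q (Cminus (Copp (Cmult al ng))
                        (Cdiv (Cmult (Cminus ng (RtoC 1)) (Cminus ng (RtoC 2))) (RtoC 2))))
  (Cmult (Cdiv (qpoch_inf (qpow q (Cminus ng al)) q)
               (qpoch_inf (qpow q (Cminus ng (RtoC 1))) q))
  (Cmult (zpow L (Cminus (RtoC 1) ng))
         (phi11 (qpow q (Cplus (Cminus al ng) (RtoC 1)))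
                (qpow q (Cminus (RtoC 2) ng)) q
                (Copp (Cmult (RtoC q) z))))).

(* Write a = q^alpha, b = q^gamma and
     F(w) = Phi(a;b;(b/a)w) Phi(a/b;q/b;(q/a)w)
            + (b/q)(1-b/a) w / ((1-b/q)(1-b)) Phi(a;bq;(bq/a)w) Phi(aq/b;q^2/b;(q/a)w),
   where Phi(a;b;x) = 1phi1(a;b;q,x).  Four contiguous relations of 1phi1 (two shifting
   the parameters, two relating the arguments x and qx) combine into the q-difference
   equation F(w) = (1-w) F(qw).  As F(q^n w) -> 1, iterating gives F(w) = (w;q)_oo, which
   is the second identity.  The first one is the same identity at w = -q^alpha z, once
   phi_0, phi_1, psi_0, psi_1 are written in terms of a and b and the infinite products
   are related by (x;q)_oo = (1-x)(xq;q)_oo. *)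

From Stdlib Require Import Reals ZArith Lra Lia.
From Coquelicot Require Import Coquelicot.
Open Scope R_scope.
Local Open Scope C_scope.

Lemma cexp_add u v : cexp (u + v) = cexp u * cexp v.
Proof.
  destruct u as [u1 u2], v as [v1 v2]; unfold cexp; simpl.
  rewrite exp_plus, cos_plus, sin_plus.
  apply injective_projections; simpl; ring.
Qed.

Lemma cexp_0 : cexp 0 = 1.
Proof.
  unfold cexp; simpl; rewrite exp_0, cos_0, sin_0.
  apply injective_projections; simpl; ring.
Qed.

Lemma cexp_neq0 u : cexp u <> 0.
Proof.
  intro H; assert (E := cexp_add u (- u)).
  replace (u + - u) with (RtoC 0) in E by ring.
  rewrite H, Cmult_0_l, cexp_0 in E.
  injection E; lra.
Qed.

Lemma qpow_add q s t : qpow q (s + t) = qpow q s * qpow q t.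
Proof. unfold qpow; rewrite <- cexp_add; f_equal; ring. Qed.

Lemma qpow_neq0 q s : qpow q s <> 0.
Proof. apply cexp_neq0. Qed.

Lemma qpow_sub q s t : qpow q (s - t) = qpow q s / qpow q t.
Proof.
  assert (E := qpow_add q (s - t) t).
  replace (s - t + t) with s in E by ring.
  rewrite E; field; apply qpow_neq0.
Qed.

Lemma qpow_1 q : 0 < q -> qpow q 1 = q.
Proof.
  intro hq; unfold qpow, cexp; simpl.
  replace (1 * ln q - 0 * 0)%R with (ln q) by ring.
  replace (1 * 0 + 0 * ln q)%R with 0%R by ring.
  rewrite cos_0, sin_0, exp_ln by lra.
  apply injective_projections; simpl; ring.
Qed.

Lemma qpow_nat q n : 0 < q -> qpow q (INR n) = (q ^ n)%R.
Proof.
  intro hq; induction n as [|n IHn].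
  - unfold qpow; simpl; rewrite Cmult_0_l; exact cexp_0.
  - rewrite S_INR, RtoC_plus, qpow_add, IHn, qpow_1 by exact hq.
    simpl; rewrite RtoC_mult; ring.
Qed.

Lemma zpow_add L s t : zpow L (s + t) = zpow L s * zpow L t.
Proof. unfold zpow; rewrite <- cexp_add; f_equal; ring. Qed.

Lemma zpow_1 L : zpow L 1 = cexp L.
Proof. unfold zpow; f_equal; ring. Qed.

Definition is_lim_Cseq (u : nat -> C) (l : C) : Prop := filterlim u eventually (locally l).

Lemma is_lim_Cseq_Clim u l : is_lim_Cseq u l -> Clim u = l.
Proof.
  intro H; unfold Clim.
  assert (Re_Im : is_lim_seq (fun k => Re (u k)) (Re l) /\ is_lim_seq (fun k => Im (u k)) (Im l)).
  { split; apply filterlim_locally; intro eps;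
      apply (filter_imp (fun n => ball l eps (u n)));
      try exact (proj1 (filterlim_locally _ _) H eps);
      intros n Hn; [exact (proj1 Hn) | exact (proj2 Hn)]. }
  destruct Re_Im as [HRe HIm].
  rewrite (is_lim_seq_unique _ _ HRe), (is_lim_seq_unique _ _ HIm).
  destruct l; reflexivity.
Qed.

Lemma is_lim_Cseq_unique u l m : is_lim_Cseq u l -> is_lim_Cseq u m -> l = m.
Proof. exact (filterlim_locally_unique (K := C_AbsRing) (V := C_NormedModule) u l m). Qed.

Lemma is_lim_Cseq_const c : is_lim_Cseq (fun _ => c) c.
Proof. apply filterlim_const. Qed.

Lemma is_lim_Cseq_ext u v l : (forall n, u n = v n) -> is_lim_Cseq u l -> is_lim_Cseq v l.
Proof. exact (filterlim_ext u v). Qed.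

Lemma is_lim_Cseq_incr_1 u l : is_lim_Cseq u l -> is_lim_Cseq (fun n => u (S n)) l.
Proof.
  intro H; eapply filterlim_comp; [|exact H].
  apply eventually_subseq; intro n; lia.
Qed.

Lemma is_lim_Cseq_plus u v l m : is_lim_Cseq u l -> is_lim_Cseq v m ->
  is_lim_Cseq (fun n => u n + v n) (l + m).
Proof.
  intros Hu Hv; eapply filterlim_comp_2; [exact Hu | exact Hv |].
  exact (filterlim_plus (K := C_AbsRing) (V := C_NormedModule) l m).
Qed.

Lemma is_lim_Cseq_Cmod u l : is_lim_Cseq u l -> is_lim_seq (fun n => Cmod (u n)) (Cmod l).
Proof.
  intro H; eapply filterlim_comp; [exact H|].
  exact (filterlim_norm (K := C_AbsRing) (V := C_NormedModule) l).
Qed.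

Lemma is_lim_Cseq_Cmod_le u l (e : nat -> R) :
  (forall n, Cmod (u n - l) <= e n) -> is_lim_seq e 0 -> is_lim_Cseq u l.
Proof.
  intros He H; apply filterlim_locally; intro eps.
  destruct (proj1 (filterlim_locally _ _) H eps) as [N HN]; exists N; intros n Hn.
  apply (norm_compat1 (K := C_AbsRing) (V := C_NormedModule)).
  change (Cmod (u n - l) < eps).
  specialize (HN n Hn); change (Rabs (e n - 0) < eps) in HN.
  specialize (He n); rewrite Rminus_0_r in HN; apply Rabs_lt_between in HN; lra.
Qed.

Lemma is_lim_Cseq_Cmod_sub u l : is_lim_Cseq u l -> is_lim_seq (fun n => Cmod (u n - l)) 0.
Proof.
  intro H; apply filterlim_locally; intro eps.
  set (k := norm_factor (K := C_AbsRing) (V := C_NormedModule)).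
  assert (hk : 0 < k) by apply norm_factor_gt_0.
  assert (heps : 0 < eps / k) by (apply Rdiv_lt_0_compat; [apply cond_pos | exact hk]).
  apply (filter_imp (fun n => ball l (mkposreal _ heps) (u n))).
  2: exact (proj1 (filterlim_locally _ _) H (mkposreal _ heps)).
  intros n Hn; apply (norm_compat2 (K := C_AbsRing) (V := C_NormedModule)) in Hn.
  change (Cmod (u n - l) < k * (eps / k))%R in Hn.
  change (Rabs (Cmod (u n - l) - 0) < eps).
  rewrite Rminus_0_r, Rabs_pos_eq by apply Cmod_ge_0.
  replace (k * (eps / k))%R with (pos eps) in Hn by (field; lra); exact Hn.
Qed.

(* [filterlim_mult] is stated for the balls of [C_AbsRing], which are not those of
   [locally] on [C] (a product of real intervals); hence the detour through moduli. *)
Lemma is_lim_Cseq_mult u v l m : is_lim_Cseq u l -> is_lim_Cseq v m ->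
  is_lim_Cseq (fun n => u n * v n) (l * m).
Proof.
  intros Hu Hv; apply is_lim_Cseq_Cmod_sub in Hu; apply is_lim_Cseq_Cmod_sub in Hv.
  apply (is_lim_Cseq_Cmod_le _ _ (fun n => Cmod (u n - l) * Cmod (v n - m)
    + Cmod (u n - l) * Cmod m + Cmod l * Cmod (v n - m))%R).
  - intro n.
    replace (u n * v n - l * m)
      with ((u n - l) * (v n - m) + (u n - l) * m + l * (v n - m)) by ring.
    eapply Rle_trans; [apply Cmod_triangle|]; rewrite Cmod_mult.
    apply Rplus_le_compat_r; eapply Rle_trans; [apply Cmod_triangle|].
    rewrite !Cmod_mult; lra.
  - replace (Finite 0) with (Finite (0 * 0 + 0 * Cmod m + Cmod l * 0)%R) by (f_equal; ring).
    apply is_lim_seq_plus'; [apply is_lim_seq_plus'|];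
      apply is_lim_seq_mult'; auto; apply is_lim_seq_const.
Qed.

Lemma is_series_C_unique (u : nat -> C) l m : is_series u l -> is_series u m -> l = m.
Proof. exact (filterlim_locally_unique (K := C_AbsRing) (V := C_NormedModule) _ l m). Qed.

Lemma is_series_C_ext (u v : nat -> C) l : (forall n, u n = v n) -> is_series u l -> is_series v l.
Proof. exact (is_series_ext (K := C_AbsRing) (V := C_NormedModule) u v l). Qed.

Lemma is_series_C_scal c (u : nat -> C) l : is_series u l -> is_series (fun k => c * u k) (c * l).
Proof. exact (is_series_scal_l (K := C_AbsRing) (V := C_NormedModule) c u l). Qed.

Lemma is_series_C_plus (u v : nat -> C) l m : is_series u l -> is_series v m ->
  is_series (fun k => u k + v k) (l + m).
Proof. exact (is_series_plus (K := C_AbsRing) (V := C_NormedModule) u v l m). Qed.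

Lemma is_series_C_opp (u : nat -> C) l : is_series u l -> is_series (fun k => - u k) (- l).
Proof. exact (is_series_opp (K := C_AbsRing) (V := C_NormedModule) u l). Qed.

Lemma is_series_C_shift x (u : nat -> C) l : is_series u l ->
  is_series (fun k => match k with O => RtoC 0 | S j => x * u j end) (x * l).
Proof.
  intro H; apply (is_series_decr_1 (K := C_AbsRing) (V := C_NormedModule)).
  replace (plus _ _) with (x * l) by (change (x * l = x * l + - 0); ring).
  apply is_series_C_scal; exact H.
Qed.

Lemma is_series_Cmod_le (u : nat -> C) l (v : nat -> R) s :
  is_series u l -> is_series v s -> (forall k, Cmod (u k) <= v k) -> Cmod l <= s.
Proof.
  intros Hu Hv Hle.
  assert (Hsum : forall n, Cmod (sum_n u n) <= sum_n v n).
  { induction n as [|n IHn].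
    - rewrite !sum_O; apply Hle.
    - rewrite !sum_Sn; eapply Rle_trans;
        [apply (norm_triangle (K := C_AbsRing) (V := C_NormedModule))|].
      change (Cmod (sum_n u n) + Cmod (u (S n)) <= sum_n v n + v (S n)).
      specialize (Hle (S n)); lra. }
  assert (Hv' : is_lim_seq (sum_n v) s) by exact Hv.
  exact (is_lim_seq_le _ _ _ _ Hsum (is_lim_Cseq_Cmod _ _ Hu) Hv').
Qed.

(** * q-Pochhammer symbols and the terms of 1phi1 *)

Definition qfactors_nz (q : R) (b : C) : Prop := forall j : nat, 1 - b * (q ^ j)%R <> 0.

Lemma qfactors_nz_of_notin_qZ q b : 0 < q ->
  (forall m : Z, b <> qpow q (IZR m)) -> qfactors_nz q b.
Proof.
  intros hq hb j E; apply (hb (- Z.of_nat j)%Z).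
  assert (Hj : qpow q (INR j) * qpow q (- INR j) = 1).
  { rewrite <- qpow_add; replace (INR j + - INR j) with (RtoC 0) by ring.
    unfold qpow; rewrite Cmult_0_l; exact cexp_0. }
  rewrite opp_IZR, <- INR_IZR_INZ, RtoC_opp.
  rewrite qpow_nat in Hj by exact hq.
  replace b with (b * ((q ^ j)%R * qpow q (- INR j))) at 1 by (rewrite Hj; ring).
  rewrite Cmult_assoc; replace (b * (q ^ j)%R) with (1 - (1 - b * (q ^ j)%R)) by ring.
  rewrite E; ring.
Qed.

Lemma qfactors_nz_inv_of_notin_qZ q (b : C) : 0 < q -> b <> 0 ->
  (forall m : Z, b <> qpow q (IZR m)) -> qfactors_nz q (q / b).
Proof.
  intros hq hb0 hb j E; apply (hb (Z.of_nat (S j))).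
  rewrite <- INR_IZR_INZ, qpow_nat by exact hq; simpl; rewrite RtoC_mult.
  replace (q * (q ^ j)%R) with (b * (1 - (1 - q / b * (q ^ j)%R))) by (field; exact hb0).
  rewrite E; ring.
Qed.

Section QSeries.

Variable q : R.
Hypothesis hq0 : 0 < q.
Hypothesis hq1 : q < 1.

Lemma RtoC_pow_S k : RtoC (q ^ S k) = q * (q ^ k)%R.
Proof. simpl; rewrite RtoC_mult; reflexivity. Qed.

Lemma qpochS a k : qpoch a q (S k) = qpoch a q k * (1 - a * (q ^ k)%R).
Proof. reflexivity. Qed.

Lemma qpoch_Sl a k : qpoch a q (S k) = (1 - a) * qpoch (a * q) q k.
Proof.
  induction k as [|k IHk].
  - simpl; ring.
  - rewrite qpochS, IHk, qpochS, RtoC_pow_S; ring.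
Qed.

Lemma qpoch_add a j k : qpoch a q (j + k) = qpoch a q j * qpoch (a * (q ^ j)%R) q k.
Proof.
  induction k as [|k IHk].
  - rewrite Nat.add_0_r; simpl; ring.
  - rewrite Nat.add_succ_r, !qpochS, IHk, pow_add, RtoC_mult; ring.
Qed.

Lemma qpoch_neq0 b k : qfactors_nz q b -> qpoch b q k <> 0.
Proof.
  intro hb; induction k as [|k IHk].
  - intro E; injection E; lra.
  - rewrite qpochS; apply Cmult_neq_0; auto.
Qed.

Lemma qfactors_nz_mulq b : qfactors_nz q b -> qfactors_nz q (b * q).
Proof.
  intros hb j; specialize (hb (S j)).
  rewrite RtoC_pow_S, Cmult_assoc in hb; exact hb.
Qed.

Lemma qfactors_nz_0 b : qfactors_nz q b -> 1 - b <> 0.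
Proof. intro hb; specialize (hb 0%nat); rewrite Cmult_1_r in hb; exact hb. Qed.

Lemma pow_in_01 j : 0 <= q ^ j <= 1.
Proof.
  induction j as [|j IHj]; simpl; [lra|].
  split; nra.
Qed.

Lemma one_sub_q_le j : 1 - q <= Cmod (1 - q * (q ^ j)%R).
Proof.
  rewrite <- RtoC_mult, <- RtoC_minus, Cmod_R.
  assert (H := pow_in_01 j).
  rewrite Rabs_pos_eq; nra.
Qed.

Lemma qfactors_nz_q : qfactors_nz q q.
Proof.
  intros j E; assert (H := one_sub_q_le j).
  rewrite E, Cmod_0 in H; lra.
Qed.

Lemma triangular_S k : ((S k * (S k - 1)) / 2 = k * (k - 1) / 2 + k)%nat.
Proof.
  replace (S k * (S k - 1))%nat with (k * (k - 1) + k * 2)%nat.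
  - apply Nat.div_add; lia.
  - destruct k; simpl; lia.
Qed.

Definition qsign (k : nat) : R := (-1) ^ k * q ^ (k * (k - 1) / 2).

Lemma qsign_S k : RtoC (qsign (S k)) = - (q ^ k)%R * qsign k.
Proof.
  unfold qsign; rewrite triangular_S, pow_add, <- RtoC_opp, <- RtoC_mult.
  f_equal; simpl; ring.
Qed.

Lemma phi11_termE a b x k : phi11_term a b q x k =
  qsign k * (qpoch a q k / (qpoch b q k * qpoch q q k) * x ^ k).
Proof. reflexivity. Qed.

Lemma phi11_term_0 a b x : phi11_term a b q x 0 = 1.
Proof.
  rewrite phi11_termE; unfold qsign; cbn [qpoch Cpow].
  replace ((-1) ^ 0 * q ^ (0 * (0 - 1) / 2))%R with 1%R by (simpl; ring).
  field.
Qed.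

Lemma phi11_term_contig_b a b y k : qfactors_nz q b ->
  phi11_term a (b * q) q y k
  = (1 - b) * phi11_term a b q y k + b * phi11_term a (b * q) q (q * y) k.
Proof.
  intro hb; rewrite !phi11_termE, Cpow_mult_l, <- RtoC_pow.
  assert (E : qpoch (b * q) q k = qpoch b q k * (1 - b * (q ^ k)%R) / (1 - b)).
  { rewrite <- qpochS, qpoch_Sl; field; apply qfactors_nz_0; exact hb. }
  rewrite E.
  assert (n1 := qfactors_nz_0 b hb); assert (n2 := qpoch_neq0 b k hb).
  assert (n3 := qpoch_neq0 q k qfactors_nz_q).
  field; repeat split; auto.
Qed.

Lemma phi11_term_qdiff_b a b x j : qfactors_nz q b ->
  phi11_term a b q x (S j)
  = phi11_term a b q (q * x) (S j)
    + x * (- phi11_term a b q (q * x) j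
           + (a - b) / (1 - b) * phi11_term a (b * q) q (q * (q * x)) j).
Proof.
  intro hb.
  rewrite !phi11_termE, !qsign_S, !Cpow_S, !Cpow_mult_l, <- !RtoC_pow.
  rewrite !(qpochS a j), !(qpochS b j), !(qpochS q j).
  assert (E : qpoch (b * q) q j = qpoch b q j * (1 - b * (q ^ j)%R) / (1 - b)).
  { rewrite <- qpochS, qpoch_Sl; field; apply qfactors_nz_0; exact hb. }
  rewrite E.
  assert (n1 := qfactors_nz_0 b hb); assert (n2 := qpoch_neq0 b j hb).
  assert (n3 := qpoch_neq0 q j qfactors_nz_q); assert (n4 := qfactors_nz_q j).
  field; repeat split; auto.
Qed.

Lemma phi11_term_qdiff_ab u v x j : qfactors_nz q v ->
  phi11_term u v q x (S j)
  = phi11_term u v q (q * x) (S j)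
    - x * (1 - u) / (1 - v) * phi11_term (u * q) (v * q) q (q * x) j.
Proof.
  intro hv.
  rewrite !phi11_termE, !qsign_S, !Cpow_S, !Cpow_mult_l, <- !RtoC_pow.
  rewrite !(qpoch_Sl u j), !(qpoch_Sl v j), !(qpochS q j).
  assert (n1 := qfactors_nz_0 v hv).
  assert (n2 := qpoch_neq0 _ j (qfactors_nz_mulq v hv)).
  assert (n3 := qpoch_neq0 q j qfactors_nz_q); assert (n4 := qfactors_nz_q j).
  field; repeat split; auto.
Qed.

Lemma phi11_term_contig_ab u v x j : qfactors_nz q v ->
  phi11_term (u * q) (v * q) q x (S j)
  = (1 - v) * phi11_term u v q (q * x) (S j)
    + v * phi11_term (u * q) (v * q) q (q * x) (S j)
    - x * phi11_term (u * q) (v * q) q (q * x) j.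
Proof.
  intro hv.
  rewrite !phi11_termE, !qsign_S, !Cpow_S, !Cpow_mult_l, <- !RtoC_pow.
  rewrite !(qpoch_Sl u j), !(qpoch_Sl v j), !(qpochS q j).
  rewrite !(qpochS (u * q) j), !(qpochS (v * q) j).
  assert (n1 := qfactors_nz_0 v hv); assert (hvq := qfactors_nz_mulq v hv).
  assert (n2 := qpoch_neq0 _ j hvq).
  assert (n3 := qpoch_neq0 q j qfactors_nz_q); assert (n4 := qfactors_nz_q j).
  field; repeat split; auto.
Qed.

(** * Convergence *)

Local Close Scope C_scope.

Lemma exp_le_exp_compat x y : x <= y -> exp x <= exp y.
Proof.
  intro H; destruct (Rle_lt_or_eq_dec _ _ H) as [Hlt | ->]; [|lra].
  left; apply exp_increasing; exact Hlt.
Qed.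

Lemma Cmod_qpoch_le a k : Cmod (qpoch a q k) <= exp (Cmod a / (1 - q)).
Proof.
  assert (pa : 0 <= Cmod a) by apply Cmod_ge_0.
  assert (Hk : Cmod (qpoch a q k) <= exp (Cmod a * ((1 - q ^ k) / (1 - q)))).
  { induction k as [|k IHk].
    - change (qpoch a q 0) with (RtoC 1); rewrite Cmod_1; simpl.
      replace (Cmod a * ((1 - 1) / (1 - q))) with 0 by (field; lra).
      rewrite exp_0; lra.
    - rewrite qpochS, Cmod_mult.
      replace (Cmod a * ((1 - q ^ S k) / (1 - q)))
        with (Cmod a * ((1 - q ^ k) / (1 - q)) + Cmod a * q ^ k) by (simpl; field; lra).
      rewrite exp_plus; apply Rmult_le_compat; try apply Cmod_ge_0; auto.
      eapply Rle_trans; [|apply exp_ineq1_le].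
      eapply Rle_trans; [apply Cmod_triangle|].
      rewrite Cmod_opp, Cmod_mult, Cmod_1, Cmod_R, Rabs_pos_eq by (apply pow_le; lra); lra. }
  eapply Rle_trans; [exact Hk|]; apply exp_le_exp_compat.
  assert (H := pow_in_01 k).
  unfold Rdiv; rewrite <- Rmult_assoc; apply Rmult_le_compat_r.
  - left; apply Rinv_0_lt_compat; lra.
  - nra.
Qed.

Lemma Cmod_qpoch_ge_half w m : Cmod w <= (1 - q) / 2 -> 1 / 2 <= Cmod (qpoch w q m).
Proof.
  intro hw; assert (pw : 0 <= Cmod w) by apply Cmod_ge_0.
  assert (Hs : forall n, 0 <= Cmod w * ((1 - q ^ n) / (1 - q)) <= 1 / 2).
  { intro n; assert (pn := pow_in_01 n); split.
    - apply Rmult_le_pos; [lra|]; apply Rdiv_le_0_compat; lra.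
    - apply (Rle_trans _ ((1 - q) / 2 * (1 / (1 - q)))); [|right; field; lra].
      apply Rmult_le_compat; try lra; [apply Rdiv_le_0_compat; lra|].
      unfold Rdiv; apply Rmult_le_compat_r; [left; apply Rinv_0_lt_compat|]; lra. }
  enough (H : 1 - Cmod w * ((1 - q ^ m) / (1 - q)) <= Cmod (qpoch w q m))
    by (specialize (Hs m); lra).
  induction m as [|m IHm].
  - change (qpoch w q 0) with (RtoC 1); rewrite Cmod_1; simpl.
    replace ((1 - 1) / (1 - q)) with 0 by (field; lra); lra.
  - rewrite qpochS, Cmod_mult.
    assert (pm := pow_in_01 m); specialize (Hs m).
    set (s := Cmod w * ((1 - q ^ m) / (1 - q))) in *; set (t := Cmod w * q ^ m).
    assert (ht : 0 <= t <= 1 / 2).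
    { unfold t; split; [apply Rmult_le_pos; lra|].
      apply (Rle_trans _ ((1 - q) / 2 * 1)); [apply Rmult_le_compat; lra | lra]. }
    assert (T : 1 - t <= Cmod (1 - w * (q ^ m)%R)%C).
    { assert (T0 := Cmod_triangle (1 - w * (q ^ m)%R)%C (w * (q ^ m)%R)%C).
      replace (1 - w * (q ^ m)%R + w * (q ^ m)%R)%C with (RtoC 1) in T0 by ring.
      rewrite Cmod_1, Cmod_mult, Cmod_R, Rabs_pos_eq in T0 by lra; unfold t; lra. }
    replace (1 - Cmod w * ((1 - q ^ S m) / (1 - q))) with (1 - s - t)
      by (unfold s, t; simpl; field; lra).
    (* (1 - s) (1 - t) >= 1 - s - t *)
    nra.
Qed.

Lemma eventually_small_geom (c eps : R) : 0 < eps ->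
  exists J, forall j, (J <= j)%nat -> c * q ^ j < eps.
Proof.
  intro heps.
  assert (L : is_lim_seq (fun j => c * q ^ j) 0).
  { replace (Finite 0) with (Rbar_mult c 0) by (simpl; f_equal; ring).
    apply is_lim_seq_scal_l, is_lim_seq_geom; rewrite Rabs_pos_eq; lra. }
  destruct (proj1 (filterlim_locally _ _) L (mkposreal _ heps)) as [J HJ].
  exists J; intros j Hj; specialize (HJ j Hj).
  change (Rabs (c * q ^ j - 0) < eps) in HJ; apply Rabs_lt_between in HJ; lra.
Qed.

Lemma qfactors_lower_bound b : qfactors_nz q b ->
  exists d, 0 < d /\ forall j, d <= Cmod (1 - b * (q ^ j)%R)%C.
Proof.
  intro hb.
  destruct (eventually_small_geom (Cmod b) (1 / 2) ltac:(lra)) as [J HJ].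
  assert (Hfin : forall N, exists d, 0 < d /\
            forall j, (j < N)%nat -> d <= Cmod (1 - b * (q ^ j)%R)%C).
  { induction N as [|N IHN].
    - exists 1; split; [lra | intros j Hj; lia].
    - destruct IHN as [d [hd Hd]].
      exists (Rmin d (Cmod (1 - b * (q ^ N)%R)%C)); split.
      + apply Rmin_glb_lt; [exact hd | apply Cmod_gt_0, hb].
      + intros j Hj; destruct (Nat.eq_dec j N) as [-> | Hne]; [apply Rmin_r|].
        eapply Rle_trans; [apply Rmin_l | apply Hd; lia]. }
  destruct (Hfin J) as [d [hd Hd]].
  exists (Rmin d (1 / 2)); split; [apply Rmin_glb_lt; lra|].
  intro j; destruct (Nat.lt_ge_cases j J) as [Hj|Hj].
  - eapply Rle_trans; [apply Rmin_l | auto].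
  - eapply Rle_trans; [apply Rmin_r|].
    specialize (HJ j Hj).
    assert (T := Cmod_triangle (1 - b * (q ^ j)%R)%C (b * (q ^ j)%R)%C).
    replace (1 - b * (q ^ j)%R + b * (q ^ j)%R)%C with (RtoC 1) in T by ring.
    rewrite Cmod_1, Cmod_mult, Cmod_R, Rabs_pos_eq in T by (apply pow_le; lra); lra.
Qed.

Lemma Cmod_qpoch_ge b d k : 0 <= d -> (forall j, d <= Cmod (1 - b * (q ^ j)%R)%C) ->
  d ^ k <= Cmod (qpoch b q k).
Proof.
  intros hd H; induction k as [|k IHk].
  - change (qpoch b q 0) with (RtoC 1); rewrite Cmod_1; simpl; lra.
  - rewrite qpochS, Cmod_mult; simpl; rewrite Rmult_comm.
    apply Rmult_le_compat; auto; apply pow_le; auto.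
Qed.

Lemma qpoch_is_lim x : is_lim_Cseq (qpoch x q) (qpoch_inf x q).
Proof.
  set (e := fun k => match k with O => RtoC 1 | S j => (- (qpoch x q j * (x * (q ^ j)%R)))%C end).
  set (M := exp (Cmod x / (1 - q))).
  assert (Hsum : forall n, sum_n e n = qpoch x q n).
  { induction n as [|n IHn]; [rewrite sum_O; reflexivity|].
    rewrite sum_Sn, IHn, qpochS.
    change (qpoch x q n + - (qpoch x q n * (x * (q ^ n)%R)) = qpoch x q n * (1 - x * (q ^ n)%R))%C.
    ring. }
  assert (Ex : ex_series e).
  { apply (ex_series_le (K := C_AbsRing) (V := C_CompleteNormedModule) _
      (fun k => match k with O => 1 | S j => M * Cmod x * q ^ j end)).
    - intros [|j]; simpl.
      + change (Cmod 1 <= 1); rewrite Cmod_1; lra.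
      + change (Cmod (- (qpoch x q j * (x * (q ^ j)%R)))%C <= M * Cmod x * q ^ j).
        rewrite Cmod_opp, !Cmod_mult, Cmod_R, Rabs_pos_eq by (apply pow_le; lra).
        rewrite Rmult_assoc; apply Rmult_le_compat_r; [|apply Cmod_qpoch_le].
        apply Rmult_le_pos; [apply Cmod_ge_0 | apply pow_le; lra].
    - apply (ex_series_incr_1 (K := R_AbsRing) (V := R_NormedModule)).
      apply (ex_series_scal_l (K := R_AbsRing) (V := R_NormedModule)), ex_series_geom.
      rewrite Rabs_pos_eq; lra. }
  destruct Ex as [l Hl].
  assert (H : is_lim_Cseq (qpoch x q) l) by exact (filterlim_ext _ _ Hsum Hl).
  unfold qpoch_inf; rewrite (is_lim_Cseq_Clim _ _ H); exact H.
Qed.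

Lemma qpoch_inf_neq0 b : qfactors_nz q b -> qpoch_inf b q <> RtoC 0.
Proof.
  intro hb.
  destruct (eventually_small_geom (Cmod b) ((1 - q) / 2) ltac:(lra)) as [J HJ].
  set (w := (b * (q ^ J)%R)%C).
  assert (hw : Cmod w <= (1 - q) / 2).
  { unfold w; rewrite Cmod_mult, Cmod_R, Rabs_pos_eq by (apply pow_le; lra).
    left; apply HJ; lia. }
  set (k := Cmod (qpoch b q J)).
  assert (pk : 0 < k) by (apply Cmod_gt_0, qpoch_neq0, hb).
  assert (Lb : forall m, k * (1 / 2) <= Cmod (qpoch b q (m + J))).
  { intro m; rewrite Nat.add_comm, qpoch_add, Cmod_mult; fold w k.
    apply Rmult_le_compat_l; [lra | apply Cmod_qpoch_ge_half; exact hw]. }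
  assert (Ln := is_lim_Cseq_Cmod _ _ (qpoch_is_lim b)).
  apply (is_lim_seq_incr_n _ J) in Ln.
  assert (Le := is_lim_seq_le _ _ _ _ Lb (is_lim_seq_const _) Ln); simpl in Le.
  intro E; rewrite E, Cmod_0 in Le; lra.
Qed.

Lemma Rabs_qsign k : Rabs (qsign k) = q ^ (k * (k - 1) / 2).
Proof.
  unfold qsign; rewrite Rabs_mult, <- !RPow_abs, (Rabs_pos_eq q), (Rabs_left (-1)) by lra.
  replace (- -1) with 1 by ring; rewrite pow1; ring.
Qed.

Lemma Cmod_phi11_term_le a b x d k : 0 < d -> qfactors_nz q b ->
  (forall j, d <= Cmod (1 - b * (q ^ j)%R)%C) ->
  Cmod (phi11_term a b q x k)
  <= exp (Cmod a / (1 - q)) * (q ^ (k * (k - 1) / 2) * (Cmod x / (d * (1 - q))) ^ k).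
Proof.
  intros hd hb Hd.
  assert (nb := qpoch_neq0 b k hb); assert (nq := qpoch_neq0 q k qfactors_nz_q).
  rewrite phi11_termE, !Cmod_mult, Cmod_R, Rabs_qsign, Cmod_div by (apply Cmult_neq_0; auto).
  rewrite Cmod_mult, Cmod_pow.
  assert (LB := Cmod_qpoch_ge b d k (Rlt_le _ _ hd) Hd).
  assert (LQ := Cmod_qpoch_ge q (1 - q) k ltac:(lra) one_sub_q_le).
  assert (UA := Cmod_qpoch_le a k).
  set (A := Cmod (qpoch a q k)) in *; set (B := Cmod (qpoch b q k)) in *.
  set (Q := Cmod (qpoch q q k)) in *; set (M := exp (Cmod a / (1 - q))) in *.
  assert (pdk : 0 < d ^ k) by (apply pow_lt; auto).
  assert (pqk : 0 < (1 - q) ^ k) by (apply pow_lt; lra).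
  assert (pA : 0 <= A) by apply Cmod_ge_0.
  assert (pX : 0 <= Cmod x ^ k) by (apply pow_le, Cmod_ge_0).
  assert (pT : 0 <= q ^ (k * (k - 1) / 2)) by (apply pow_le; lra).
  unfold Rdiv; rewrite Rpow_mult_distr, pow_inv, Rpow_mult_distr.
  assert (iB : / (B * Q) <= / (d ^ k * (1 - q) ^ k)).
  { apply Rinv_le_contravar; [nra | apply Rmult_le_compat; lra]. }
  assert (pi : 0 <= / (B * Q)) by (left; apply Rinv_0_lt_compat; nra).
  assert (A * / (B * Q) <= M * / (d ^ k * (1 - q) ^ k)) by (apply Rmult_le_compat; lra).
  replace (M * (q ^ (k * (k - 1) / 2) * (Cmod x ^ k * / (d ^ k * (1 - q) ^ k))))
    with (q ^ (k * (k - 1) / 2) * (M * / (d ^ k * (1 - q) ^ k) * Cmod x ^ k)) by ring.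
  apply Rmult_le_compat_l; auto; apply Rmult_le_compat_r; auto.
Qed.

Lemma ex_series_qtriangular r : 0 <= r -> ex_series (fun k => q ^ (k * (k - 1) / 2) * r ^ k).
Proof.
  intro hr.
  assert (E : ex_series (fun k => Rabs (q ^ (k * (k - 1) / 2) * (r + 1) ^ k))).
  { apply (ex_series_DAlembert _ 0); [lra| |].
    - intro n; apply Rmult_integral_contrapositive; split; apply pow_nonzero; lra.
    - apply (is_lim_seq_ext (fun n => q ^ n * (r + 1))).
      + intro n; rewrite triangular_S, pow_add, <- tech_pow_Rmult.
        replace (q ^ (n * (n - 1) / 2) * q ^ n * ((r + 1) * (r + 1) ^ n)
                 / (q ^ (n * (n - 1) / 2) * (r + 1) ^ n))
          with (q ^ n * (r + 1)) by (field; split; apply pow_nonzero; lra).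
        symmetry; apply Rabs_pos_eq, Rmult_le_pos; [apply pow_le|]; lra.
      + replace (Finite 0) with (Rbar_mult 0 (r + 1)) by (simpl; f_equal; ring).
        apply is_lim_seq_scal_r, is_lim_seq_geom; rewrite Rabs_pos_eq; lra. }
  apply ex_series_Rabs in E.
  apply (ex_series_le (K := R_AbsRing) (V := R_CompleteNormedModule) _
           (fun k => q ^ (k * (k - 1) / 2) * (r + 1) ^ k)); [|exact E].
  intro n; change (Rabs (q ^ (n * (n - 1) / 2) * r ^ n) <= q ^ (n * (n - 1) / 2) * (r + 1) ^ n).
  assert (0 <= q ^ (n * (n - 1) / 2)) by (apply pow_le; lra).
  rewrite Rabs_pos_eq by (apply Rmult_le_pos; auto; apply pow_le; lra).
  apply Rmult_le_compat_l; auto; apply pow_incr; lra.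
Qed.

Lemma phi11_is_series a b x : qfactors_nz q b -> is_series (phi11_term a b q x) (phi11 a b q x).
Proof.
  intro hb; destruct (qfactors_lower_bound b hb) as [d [hd Hd]].
  assert (Ex : ex_series (phi11_term a b q x)).
  { apply (ex_series_le (K := C_AbsRing) (V := C_CompleteNormedModule) _
      (fun k => exp (Cmod a / (1 - q)) * (q ^ (k * (k - 1) / 2) * (Cmod x / (d * (1 - q))) ^ k))).
    - intro n; apply Cmod_phi11_term_le; auto.
    - apply (ex_series_scal_l (K := R_AbsRing) (V := R_NormedModule)), ex_series_qtriangular.
      apply Rmult_le_pos; [apply Cmod_ge_0 | left; apply Rinv_0_lt_compat; nra]. }
  destruct Ex as [l Hl]; unfold phi11; rewrite (is_lim_Cseq_Clim _ l); exact Hl.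
Qed.

Lemma phi11_sub_1_le a b r : qfactors_nz q b -> 0 <= r ->
  exists G, forall w, Cmod w <= r -> Cmod (phi11 a b q w - 1)%C <= Cmod w * G.
Proof.
  intros hb hr; destruct (qfactors_lower_bound b hb) as [d [hd Hd]].
  set (c := / (d * (1 - q))); set (M := exp (Cmod a / (1 - q))).
  assert (pc : 0 < c) by (apply Rinv_0_lt_compat; nra).
  assert (pM : 0 < M) by apply exp_pos.
  set (g := fun j : nat => M * (c * (q ^ (j * (j - 1) / 2) * (c * r) ^ j))).
  assert (Hg : is_series g (Series g)).
  { apply Series_correct, (ex_series_scal_l (K := R_AbsRing) (V := R_NormedModule)).
    apply (ex_series_scal_l (K := R_AbsRing) (V := R_NormedModule)), ex_series_qtriangular; nra. }
  exists (Series g); intros w hw.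
  assert (Htail : is_series (fun j => phi11_term a b q w (S j)) (phi11 a b q w - 1)%C).
  { apply is_series_incr_1; rewrite phi11_term_0.
    replace (plus _ _) with (phi11 a b q w)
      by (change (phi11 a b q w = phi11 a b q w - 1 + 1)%C; ring).
    apply phi11_is_series; exact hb. }
  apply (is_series_Cmod_le _ _ (fun j => Cmod w * g j) _ Htail).
  - exact (is_series_scal_l (K := R_AbsRing) (V := R_NormedModule) _ _ _ Hg).
  - intro j; eapply Rle_trans; [apply (Cmod_phi11_term_le a b w d (S j)); auto|].
    fold M; unfold g; rewrite triangular_S, pow_add.
    assert (pw : 0 <= Cmod w) by apply Cmod_ge_0.
    assert (q1 := pow_in_01 j).
    assert (pt : 0 <= q ^ (j * (j - 1) / 2)) by (apply pow_le; lra).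
    replace (Cmod w / (d * (1 - q))) with (c * Cmod w) by (unfold c, Rdiv; ring).
    rewrite !Rpow_mult_distr, <- !tech_pow_Rmult.
    assert (wr : Cmod w ^ j <= r ^ j) by (apply pow_incr; lra).
    assert (pwj : 0 <= Cmod w ^ j) by (apply pow_le; lra).
    assert (P : 0 <= M * c * c ^ j * Cmod w * q ^ (j * (j - 1) / 2))
      by (assert (0 <= c ^ j) by (apply pow_le; lra); repeat apply Rmult_le_pos; lra).
    replace (Cmod w * (M * (c * (q ^ (j * (j - 1) / 2) * (c ^ j * r ^ j)))))
      with (M * c * c ^ j * Cmod w * q ^ (j * (j - 1) / 2) * r ^ j) by ring.
    replace (M * (q ^ (j * (j - 1) / 2) * q ^ j * (c * c ^ j * (Cmod w * Cmod w ^ j))))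
      with (M * c * c ^ j * Cmod w * q ^ (j * (j - 1) / 2) * (q ^ j * Cmod w ^ j)) by ring.
    apply Rmult_le_compat_l; nra.
Qed.

Lemma is_lim_phi11_geom a b c x : qfactors_nz q b ->
  is_lim_Cseq (fun n => phi11 a b q (c * ((q ^ n)%R * x))%C) 1.
Proof.
  intro hb.
  destruct (phi11_sub_1_le a b (Cmod (c * x)%C) hb (Cmod_ge_0 _)) as [G HG].
  assert (Hw : forall n, Cmod (c * ((q ^ n)%R * x))%C = q ^ n * Cmod (c * x)%C).
  { intro n; rewrite !Cmod_mult, Cmod_R, Rabs_pos_eq by (apply pow_le; lra); ring. }
  apply (is_lim_Cseq_Cmod_le _ _ (fun n => q ^ n * Cmod (c * x)%C * G)).
  - intro n; rewrite <- Hw; apply HG.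
    rewrite Hw; assert (H := pow_in_01 n); assert (H' := Cmod_ge_0 (c * x)%C); nra.
  - replace (Finite 0) with (Rbar_mult 0 (Cmod (c * x)%C * G)) by (simpl; f_equal; ring).
    apply (is_lim_seq_ext (fun n => q ^ n * (Cmod (c * x)%C * G))); [intro; ring|].
    apply is_lim_seq_scal_r, is_lim_seq_geom; rewrite Rabs_pos_eq; lra.
Qed.

Local Open Scope C_scope.

Lemma qpoch_inf_Sl x : qpoch_inf x q = (1 - x) * qpoch_inf (x * q) q.
Proof.
  apply (is_lim_Cseq_unique (fun n => qpoch x q (S n))).
  - exact (is_lim_Cseq_incr_1 _ _ (qpoch_is_lim x)).
  - apply (is_lim_Cseq_ext (fun n => (1 - x) * qpoch (x * q) q n));
      [intro n; symmetry; apply qpoch_Sl|].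
    exact (is_lim_Cseq_mult _ _ _ _ (is_lim_Cseq_const _) (qpoch_is_lim _)).
Qed.

Lemma is_lim_Cseq_geom z : is_lim_Cseq (fun n => (q ^ n)%R * z) 0.
Proof.
  apply (is_lim_Cseq_Cmod_le _ _ (fun n => q ^ n * Cmod z)%R).
  - intro n; replace ((q ^ n)%R * z - 0) with ((q ^ n)%R * z) by ring.
    rewrite Cmod_mult, Cmod_R, Rabs_pos_eq by (apply pow_le; lra); lra.
  - replace (Finite 0) with (Rbar_mult 0 (Cmod z)) by (simpl; f_equal; ring).
    apply is_lim_seq_scal_r, is_lim_seq_geom; rewrite Rabs_pos_eq; lra.
Qed.

Lemma eq_qpoch_inf_of_qdiff (G : C -> C) z :
  (forall w, G w = (1 - w) * G (q * w)) ->
  is_lim_Cseq (fun n => G ((q ^ n)%R * z)) 1 ->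
  G z = qpoch_inf z q.
Proof.
  intros HG HL.
  assert (E : forall n, G z = qpoch z q n * G ((q ^ n)%R * z)).
  { induction n as [|n IHn].
    - simpl; rewrite !Cmult_1_l; reflexivity.
    - rewrite IHn, HG, qpochS, RtoC_pow_S.
      replace (q * ((q ^ n)%R * z)) with (q * (q ^ n)%R * z) by ring; ring. }
  apply (is_lim_Cseq_unique (fun _ => G z)); [apply is_lim_Cseq_const|].
  apply (is_lim_Cseq_ext _ _ _ (fun n => eq_sym (E n))).
  rewrite <- (Cmult_1_r (qpoch_inf z q)).
  exact (is_lim_Cseq_mult _ _ _ _ (qpoch_is_lim z) HL).
Qed.

(** * Contiguous relations and the Casoratian of 1phi1 *)

(* The rescaled arguments are passed through equations so that the relations can be
   instantiated at ring-equal but syntactically different arguments. *)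
Lemma phi11_contig_b a b y y' : qfactors_nz q b -> y' = q * y ->
  phi11 a (b * q) q y = (1 - b) * phi11 a b q y + b * phi11 a (b * q) q y'.
Proof.
  intros hb ->; assert (hbq := qfactors_nz_mulq b hb).
  apply (is_series_C_unique (phi11_term a (b * q) q y)); [apply phi11_is_series; exact hbq|].
  eapply is_series_C_ext;
    [| apply is_series_C_plus; apply is_series_C_scal; apply phi11_is_series; assumption].
  intro k; symmetry; apply phi11_term_contig_b; exact hb.
Qed.

Lemma phi11_qdiff_b a b x y y' : qfactors_nz q b -> y = q * x -> y' = q * y ->
  phi11 a b q x
  = phi11 a b q y + x * (- phi11 a b q y + (a - b) / (1 - b) * phi11 a (b * q) q y').
Proof.
  intros hb -> ->; assert (hbq := qfactors_nz_mulq b hb).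
  apply (is_series_C_unique (phi11_term a b q x)); [apply phi11_is_series; exact hb|].
  eapply is_series_C_ext;
    [| apply is_series_C_plus; [| apply is_series_C_shift, is_series_C_plus;
         [apply is_series_C_opp | apply is_series_C_scal]]; apply phi11_is_series; assumption].
  intros [|j]; cbn beta iota.
  - rewrite !phi11_term_0; ring.
  - symmetry; apply phi11_term_qdiff_b; exact hb.
Qed.

Lemma phi11_qdiff_ab u v x y : qfactors_nz q v -> y = q * x ->
  phi11 u v q x = phi11 u v q y - x * (1 - u) / (1 - v) * phi11 (u * q) (v * q) q y.
Proof.
  intros hv ->; assert (hvq := qfactors_nz_mulq v hv).
  apply (is_series_C_unique (phi11_term u v q x)); [apply phi11_is_series; exact hv|].
  eapply is_series_C_ext;
    [| apply is_series_C_plus; [| apply is_series_C_opp, is_series_C_shift];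
       apply phi11_is_series; assumption].
  intros [|j]; cbn beta iota.
  - rewrite !phi11_term_0; ring.
  - symmetry; apply phi11_term_qdiff_ab; exact hv.
Qed.

Lemma phi11_contig_ab u v x y : qfactors_nz q v -> y = q * x ->
  phi11 (u * q) (v * q) q x
  = (1 - v) * phi11 u v q y + v * phi11 (u * q) (v * q) q y - x * phi11 (u * q) (v * q) q y.
Proof.
  intros hv ->; assert (hvq := qfactors_nz_mulq v hv).
  apply (is_series_C_unique (phi11_term (u * q) (v * q) q x)); [apply phi11_is_series; exact hvq|].
  eapply is_series_C_ext;
    [| apply is_series_C_plus; [apply is_series_C_plus; apply is_series_C_scal
                               | apply is_series_C_opp, is_series_C_shift];
       apply phi11_is_series; assumption].
  intros [|j]; cbn beta iota.
  - rewrite !phi11_term_0; ring.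
  - symmetry; apply phi11_term_contig_ab; exact hv.
Qed.

Lemma neq_of_one_sub_div_neq0 (x y : C) : y <> 0 -> 1 - x / y <> 0 -> x <> y.
Proof. intros hy H E; apply H; rewrite E; field; exact hy. Qed.

Lemma phi11_casoratian (a b w : C) :
  a <> 0 -> b <> 0 -> qfactors_nz q b -> qfactors_nz q (q / b) ->
  phi11 a b q (b / a * w) * phi11 (a / b) (q / b) q (q / a * w)
  + b / q * (1 - b / a) * w / ((1 - b / q) * (1 - b))
    * (phi11 a (b * q) q (b / a * q * w) * phi11 (a / b * q) (q / b * q) q (q / a * w))
  = qpoch_inf w q.
Proof.
  intros ha hb0 hb hv.
  assert (hq : RtoC q <> 0) by (intro E; injection E; lra).
  assert (hb1 := qfactors_nz_0 b hb); assert (hv1 := qfactors_nz_0 _ hv).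
  assert (hqb := neq_of_one_sub_div_neq0 _ _ hb0 hv1).
  assert (hqb' := Cminus_eq_contra _ _ hqb); assert (hbq' := Cminus_eq_contra _ _ (not_eq_sym hqb)).
  set (K := b / q * (1 - b / a)); set (D := (1 - b / q) * (1 - b)).
  rewrite <- (Cmult_assoc (b / a) q w).
  set (F := fun x => phi11 a b q (b / a * x) * phi11 (a / b) (q / b) q (q / a * x)
    + K * x / D
      * (phi11 a (b * q) q (b / a * (q * x)) * phi11 (a / b * q) (q / b * q) q (q / a * x))).
  change (F w = qpoch_inf w q); apply eq_qpoch_inf_of_qdiff.
  - intro x; unfold F.
    rewrite (phi11_qdiff_b a b (b / a * x) (b / a * (q * x)) (b / a * (q * (q * x))))
      by (assumption || ring).
    rewrite (phi11_contig_b a b (b / a * (q * x)) (b / a * (q * (q * x)))) by (assumption || ring).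
    rewrite (phi11_qdiff_ab (a / b) (q / b) (q / a * x) (q / a * (q * x))) by (assumption || ring).
    rewrite (phi11_contig_ab (a / b) (q / b) (q / a * x) (q / a * (q * x))) by (assumption || ring).
    unfold K, D; field; repeat split; auto.
  - assert (HA' : is_lim_Cseq (fun n => phi11 a (b * q) q (b / a * (q * ((q ^ n)%R * w)))) 1).
    { apply (is_lim_Cseq_ext (fun n => phi11 a (b * q) q (b / a * q * ((q ^ n)%R * w))));
        [intro n; f_equal; ring | apply is_lim_phi11_geom, qfactors_nz_mulq, hb]. }
    assert (L := is_lim_Cseq_plus _ _ _ _
      (is_lim_Cseq_mult _ _ _ _ (is_lim_phi11_geom a b (b / a) w hb)
         (is_lim_phi11_geom (a / b) (q / b) (q / a) w hv))
      (is_lim_Cseq_mult _ _ _ _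
         (is_lim_Cseq_mult _ _ _ _
            (is_lim_Cseq_mult _ _ _ _ (is_lim_Cseq_const K) (is_lim_Cseq_geom w))
            (is_lim_Cseq_const (/ D)))
         (is_lim_Cseq_mult _ _ _ _ HA' (is_lim_phi11_geom (a / b * q) (q / b * q) (q / a) w
                                  (qfactors_nz_mulq _ hv))))).
    replace (1 * 1 + K * 0 * / D * (1 * 1)) with (RtoC 1) in L by ring.
    exact L.
Qed.

End QSeries.

Lemma phi_n_0 q al ga z :
  phi_n q al ga z 0 = qpoch_inf (qpow q ga) q * phi11 (qpow q al) (qpow q ga) q (- (qpow q ga * z)).
Proof. unfold phi_n; cbv zeta; replace (IZR 0 + ga) with ga by ring; reflexivity. Qed.

Lemma phi_n_1 q al ga z : 0 < q ->
  phi_n q al ga z 1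
  = qpoch_inf (qpow q ga * q) q * phi11 (qpow q al) (qpow q ga * q) q (- (qpow q ga * q * z)).
Proof.
  intro hq; unfold phi_n; cbv zeta.
  replace (IZR 1 + ga) with (ga + 1) by ring; rewrite qpow_add, qpow_1 by exact hq; reflexivity.
Qed.

Lemma psi_n_1 q al ga z L : 0 < q ->
  psi_n q al ga z L 1
  = qpow q (- (al * (ga + 1)) - ga * (ga - 1) / 2)
    * (qpoch_inf (qpow q ga / qpow q al * q) q / qpoch_inf (qpow q ga) q
       * (zpow L (- ga) * phi11 (qpow q al / qpow q ga) (q / qpow q ga) q (- (q * z)))).
Proof.
  intro hq; unfold psi_n; cbv zeta.
  replace (- (al * (IZR 1 + ga)) - (IZR 1 + ga - 1) * (IZR 1 + ga - 2) / 2)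
    with (- (al * (ga + 1)) - ga * (ga - 1) / 2) by field.
  replace (IZR 1 + ga - al) with (ga - al + 1) by ring.
  replace (IZR 1 + ga - 1) with ga by ring.
  replace (1 - (IZR 1 + ga)) with (- ga) by ring.
  replace (al - (IZR 1 + ga) + 1) with (al - ga) by ring.
  replace (2 - (IZR 1 + ga)) with (1 - ga) by ring.
  rewrite (qpow_add q (ga - al) 1), (qpow_sub q ga al), (qpow_sub q al ga), (qpow_sub q 1 ga).
  rewrite qpow_1 by exact hq; reflexivity.
Qed.

Lemma psi_n_0 q al ga z L : 0 < q -> cexp L = z ->
  psi_n q al ga z L 0
  = qpow q (- (al * (ga + 1)) - ga * (ga - 1) / 2) * (qpow q al * (qpow q ga / q))
    * (qpoch_inf (qpow q ga / qpow q al) q / qpoch_inf (qpow q ga / q) q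
       * (z * zpow L (- ga) * phi11 (qpow q al / qpow q ga * q) (q / qpow q ga * q) q (- (q * z)))).
Proof.
  intros hq hL; unfold psi_n; cbv zeta.
  replace (- (al * (IZR 0 + ga)) - (IZR 0 + ga - 1) * (IZR 0 + ga - 2) / 2)
    with (- (al * (ga + 1)) - ga * (ga - 1) / 2 + al + (ga - 1)) by field.
  replace (IZR 0 + ga - al) with (ga - al) by ring.
  replace (IZR 0 + ga - 1) with (ga - 1) by ring.
  replace (1 - (IZR 0 + ga)) with (1 + - ga) by ring.
  replace (al - (IZR 0 + ga) + 1) with (al - ga + 1) by ring.
  replace (2 - (IZR 0 + ga)) with (1 - ga + 1) by ring.
  rewrite (qpow_add q (_ + al) (ga - 1)), (qpow_add q _ al), (qpow_add q (al - ga) 1),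
    (qpow_add q (1 - ga) 1), (qpow_sub q ga al), (qpow_sub q ga 1), (qpow_sub q al ga),
    (qpow_sub q 1 ga), zpow_add, zpow_1, hL.
  rewrite qpow_1 by exact hq; ring.
Qed.

Lemma phi_psi_casoratian q al ga z L : 0 < q -> q < 1 ->
  qfactors_nz q (qpow q ga) -> qfactors_nz q (q / qpow q ga) -> cexp L = z ->
  phi_n q al ga z 0 * psi_n q al ga z L 1 - phi_n q al ga z 1 * psi_n q al ga z L 0
  = qpow q (- (al * (ga + 1)) - ga * (ga - 1) / 2)
    * (qpoch_inf (qpow q (ga - al + 1)) q * (qpoch_inf (- (qpow q al * z)) q * zpow L (- ga))).
Proof.
  intros hq0 hq1 hb hv hL.
  rewrite phi_n_0, phi_n_1, psi_n_0, psi_n_1 by assumption.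
  rewrite (qpow_add q (ga - al) 1), (qpow_sub q ga al), qpow_1 by exact hq0.
  set (a := qpow q al); set (b := qpow q ga).
  assert (ha : a <> 0) by apply qpow_neq0; assert (hb0 : b <> 0) by apply qpow_neq0.
  assert (hq : RtoC q <> 0) by (intro E; injection E; lra).
  assert (Hw := phi11_casoratian q hq0 hq1 a b (- (a * z)) ha hb0 hb hv).
  replace (b / a * - (a * z)) with (- (b * z)) in Hw by (field; exact ha).
  replace (q / a * - (a * z)) with (- (q * z)) in Hw by (field; exact ha).
  replace (b / a * q * - (a * z)) with (- (b * q * z)) in Hw by (field; exact ha).
  rewrite <- Hw, (qpoch_inf_Sl q hq0 hq1 (b / a)), (qpoch_inf_Sl q hq0 hq1 (b / q)).
  replace (b / q * q) with b by (field; exact hq).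
  rewrite (qpoch_inf_Sl q hq0 hq1 b).
  assert (hX := qpoch_inf_neq0 q hq0 hq1 _ (qfactors_nz_mulq q b hb)).
  assert (hb1 := qfactors_nz_0 q b hb).
  assert (hqb := neq_of_one_sub_div_neq0 _ _ hb0 (qfactors_nz_0 q _ hv)).
  assert (hqb' := Cminus_eq_contra _ _ hqb).
  field; repeat split; auto.
Qed.

Local Close Scope C_scope.

Theorem mainTheorem12 (q : R) (al ga z L : C)
  (hq0 : 0 < q) (hq1 : q < 1)
  (hga : forall m : Z, qpow q ga <> qpow q (RtoC (IZR m)))
  (hz : z <> RtoC 0) (hL : cexp L = z) :
  Cminus (Cmult (phi_n q al ga z 0) (psi_n q al ga z L 1))
         (Cmult (phi_n q al ga z 1) (psi_n q al ga z L 0))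
  = Cmult (qpow q (Cminus (Copp (Cmult al (Cplus ga (RtoC 1))))
                          (Cdiv (Cmult ga (Cminus ga (RtoC 1))) (RtoC 2))))
    (Cmult (qpoch_inf (qpow q (Cplus (Cminus ga al) (RtoC 1))) q)
    (Cmult (qpoch_inf (Copp (Cmult (qpow q al) z)) q)
           (zpow L (Copp ga))))
  /\
  Cplus
    (Cmult (phi11 (qpow q al) (qpow q ga) q (Cmult (qpow q (Cminus ga al)) z))
           (phi11 (qpow q (Cminus al ga)) (qpow q (Cminus (RtoC 1) ga)) q
                  (Cmult (qpow q (Cminus (RtoC 1) al)) z)))
    (Cmult
      (Cdiv (Cmult (Cmult (qpow q (Cminus ga (RtoC 1)))
                          (Cminus (RtoC 1) (qpow q (Cminus ga al)))) z)
            (Cmult (Cminus (RtoC 1) (qpow q (Cminus ga (RtoC 1))))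
                   (Cminus (RtoC 1) (qpow q ga))))
      (Cmult (phi11 (qpow q al) (qpow q (Cplus ga (RtoC 1))) q
                    (Cmult (qpow q (Cplus (Cminus ga al) (RtoC 1))) z))
             (phi11 (qpow q (Cplus (Cminus al ga) (RtoC 1)))
                    (qpow q (Cminus (RtoC 2) ga)) q
                    (Cmult (qpow q (Cminus (RtoC 1) al)) z))))
  = qpoch_inf z q.
Proof.
  assert (hb0 : qpow q ga <> RtoC 0) by apply qpow_neq0.
  assert (hb := qfactors_nz_of_notin_qZ q _ hq0 hga).
  assert (hv := qfactors_nz_inv_of_notin_qZ q _ hq0 hb0 hga).
  split.
  - exact (phi_psi_casoratian q al ga z L hq0 hq1 hb hv hL).
  - replace (Cminus (RtoC 2) ga) with (Cplus (Cminus (RtoC 1) ga) (RtoC 1)) by ring.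
    rewrite (qpow_add q (Cminus ga al)), (qpow_add q (Cminus al ga)), (qpow_add q ga),
      (qpow_add q (Cminus (RtoC 1) ga)), !qpow_sub, qpow_1 by exact hq0.
    exact (phi11_casoratian q hq0 hq1 _ _ z (qpow_neq0 q al) hb0 hb hv).
Qed.
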